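(* Let $k\ge2$ and $\varepsilon>0$, and let $K$, the sets $C_x$ and the map $\Phi_\varepsilon$ be as defined in the context. Let $\mathbf{q}^\ast=\Phi_\varepsilon(\mathbf{U}_k)$, where $\mathbf{U}_k$ is the uniform distribution on $[k]$. Then $\|\mathbf{q}^\ast\|_2^2=O(1/K)$, with an absolute implied constant.
   Context: Generalised Hadamard Response with parameter $\varepsilon>0$ on $[k]$: $a=2^{\lfloor\log_2\min(e^{\varepsilon},2k)\rfloor}$, $b=2^{\lceil\log_2(k/a+1)\rceil}$, $K=ab$, $s=b/2$. Let $H_b$ be the $b\times b$ Sylvester Hadamard matrix and $P_b$ the $b\times b$ all-$(-1)$ matrix; $\bar H_{a,b}\in\{-1,1\}^{K\times K}$ is the $a\times a$ block matrix with $H_b$ on the diagonal blocks and $P_b$ in all off-diagonal blocks. The $a(b-1)\ge k$ rows of $\bar H_{a,b}$ that are not the first row of a diagonal copy of $H_b$ each have exactly $s$ entries $+1$; each $x\in[k]$ is mapped to a distinct such row, and $C_x\subseteq[K]$ is the set of columns where that row equals $+1$. For a distribution $\mathbf{p}$ on $[k]$, $\Phi_\varepsilon(\mathbf{p})$ is the distribution on $[K]$ given by $\Phi_\varepsilon(\mathbf{p})(y)=\frac{1}{se^\varepsilon+K-s}\big((e^\varepsilon-1)\sum_{x\in[k]}\mathbf{p}(x)\mathbf{1}\{y\in C_x\}+1\big)$. *)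

From mathcomp Require Import all_boot all_order all_algebra.
From mathcomp Require Import all_classical all_reals all_analysis.
Set Implicit Arguments. Unset Strict Implicit. Unset Printing Implicit Defensive.
Import Order.TTheory GRing.Theory Num.Theory.
Local Open Scope ring_scope.

Section GHR.
Variable R : realType.

Definition log2r (x : R) : R := ln x / ln 2.

Definition gh_la (k : nat) (eps : R) : nat :=
  absz (Num.floor (log2r (Num.min (expR eps) (2 * k%:R)))).
Definition gh_a (k : nat) (eps : R) : nat := (2 ^ gh_la k eps)%N.

Definition gh_lb (k : nat) (eps : R) : nat :=
  absz (Num.ceil (log2r (k%:R / (gh_a k eps)%:R + 1))).
Definition gh_b (k : nat) (eps : R) : nat := (2 ^ gh_lb k eps)%N.

Definition gh_K (k : nat) (eps : R) : nat := (gh_a k eps * gh_b k eps)%N.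
Definition gh_s (k : nat) (eps : R) : nat := (gh_b k eps %/ 2)%N.
End GHR.

(* Sylvester Hadamard matrix H_{2^m}, entry (i,j) for i,j < 2^m;
   true encodes +1, false encodes -1.
   H_1 = [1],  H_{2h} = [[H_h, H_h], [H_h, -H_h]]. *)
Fixpoint sylv (m : nat) (i j : nat) : bool :=
  match m with
  | 0 => true
  | m'.+1 =>
      let h := (2 ^ m')%N in
      xorb ((h <= i) && (h <= j))%N (sylv m' (i %% h) (j %% h))
  end.

(* \bar H_{a,b} with b = 2^m: a x a block matrix, H_b on diagonal blocks,
   all -1 off the diagonal.  Entry (r, c) for r, c < a*b; true = +1. *)
Definition barH (m : nat) (r c : nat) : bool :=
  if (r %/ 2 ^ m == c %/ 2 ^ m)%N then sylv m (r %% 2 ^ m) (c %% 2 ^ m)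
  else false.

(* Phi_eps(p)(y), for an encoding f : [k] -> rows of \bar H_{a,b}
   (C_x = { y | barH (f x) y = +1 }). *)
Definition Phi (R : realType) (k : nat) (eps : R) (f : 'I_k -> nat)
    (p : 'I_k -> R) (y : nat) : R :=
  ((expR eps - 1) * (\sum_(x < k) p x * (barH (gh_lb k eps) (f x) y)%:R) + 1)
  / ((gh_s k eps)%:R * expR eps + (gh_K k eps)%:R - (gh_s k eps)%:R).

Definition unif (R : realType) (k : nat) : 'I_k -> R := fun _ => k%:R^-1.

From mathcomp Require Import all_boot all_order all_algebra.
From mathcomp Require Import all_classical all_reals all_analysis.
From mathcomp Require Import ring lra.
Set Implicit Arguments. Unset Strict Implicit. Unset Printing Implicit Defensive.
Import Order.TTheory GRing.Theory Num.Theory.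
Local Open Scope ring_scope.

(* Off the diagonal blocks \bar H_{a,b} is -1, so only the rows in the block
   of column y can be +1 there, and by injectivity of the encoding at most b of
   the sets C_x contain y.  Under the uniform input every output probability is
   therefore at most ((e^eps - 1) b/k + 1)/(s e^eps + K - s); with b = 2s and
   K = ab < 2k + 2a <= 6k this is at most 12/K, and summing K squares of such
   values gives 144/K. *)

Section ExpLog.
Variable R : realType.

Lemma ln_natr_pow2_absz (z : int) : 0 <= z ->
  ln ((2 ^ absz z)%:R : R) = z%:~R * ln 2.
Proof. by move=> z0; rewrite natrX lnXn // -[in RHS](gez0_abs z0) mulr_natl. Qed.

Lemma expR_ge1 (x : R) : 0 <= x -> 1 <= expR x.
Proof. by rewrite -expR0 ler_expR. Qed.

Lemma ln2_gt0 : 0 < ln (2 : R).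
Proof. by rewrite ln_gt0 // ltr1n. Qed.

Lemma log2rK (x : R) : ln x = log2r x * ln 2.
Proof. by rewrite /log2r divfK // (gt_eqF ln2_gt0). Qed.

Lemma log2r_ge0 (x : R) : 1 <= x -> 0 <= log2r x.
Proof. by move=> x1; apply: divr_ge0; [exact: ln_ge0 | exact: ltW ln2_gt0]. Qed.

Lemma pow2_floor_log2r_le (x : R) : 1 <= x ->
  ((2 ^ absz (Num.floor (log2r x)))%:R : R) <= x.
Proof.
move=> x1; have x0 : 0 < x by apply: lt_le_trans x1.
rewrite -ler_ln ?posrE ?ltr0n ?expn_gt0 // ln_natr_pow2_absz ?floor_ge0 ?log2r_ge0 //.
by rewrite [ln x]log2rK ler_pM2r ?ln2_gt0 ?floor_le.
Qed.

Lemma pow2_ceil_log2r_lt (x : R) : 1 <= x ->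
  ((2 ^ absz (Num.ceil (log2r x)))%:R : R) < 2 * x.
Proof.
move=> x1; have x0 : 0 < x by apply: lt_le_trans x1.
have c0 : 0 <= Num.ceil (log2r x).
  by rewrite ceil_ge0 (lt_le_trans (ltrN10 _)) ?log2r_ge0.
rewrite -ltr_ln ?posrE ?ltr0n ?expn_gt0 ?mulr_gt0 // ln_natr_pow2_absz //.
rewrite lnM ?posrE // addrC [ln x]log2rK -[X in _ + X]mul1r -mulrDl.
rewrite ltr_pM2r ?ln2_gt0 // -ltrBlDr.
by have := ceilB1_lt (log2r x); rewrite intrB.
Qed.

End ExpLog.

Section Dimensions.
Variables (R : realType) (k : nat) (eps : R).
Hypotheses (k_gt0 : (0 < k)%N) (eps_ge0 : 0 <= eps).

Lemma gh_a_gt0 : (0 < gh_a k eps)%N.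
Proof. by rewrite expn_gt0. Qed.

Lemma gh_K_gt0 : (0 < gh_K k eps)%N.
Proof. by rewrite muln_gt0 gh_a_gt0 expn_gt0. Qed.

Lemma gh_a_le : (gh_a k eps <= 2 * k)%N.
Proof.
have m1 : 1 <= Num.min (expR eps) (2 * k%:R).
  have k1 : 1 <= k%:R :> R by rewrite ler1n.
  by rewrite le_min expR_ge1 //=; lra.
rewrite -(ler_nat R) natrM (le_trans (pow2_floor_log2r_le m1)) //.
by rewrite ge_min lexx orbT.
Qed.

Lemma gh_b_lt : ((gh_b k eps)%:R : R) < 2 * (k%:R / (gh_a k eps)%:R + 1).
Proof. by apply: pow2_ceil_log2r_lt; rewrite lerDr divr_ge0. Qed.

Lemma gh_b_double : gh_b k eps = (gh_s k eps).*2.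
Proof.
have y1 : 1 < k%:R / (gh_a k eps)%:R + 1 :> R.
  by rewrite ltrDr divr_gt0 ?ltr0n ?gh_a_gt0.
have : (0 < gh_lb k eps)%N.
  rewrite absz_gt0 gt_eqF // ceil_gt0 divr_gt0 ?ln2_gt0 //.
  by rewrite ln_gt0.
by rewrite /gh_s /gh_b; case: gh_lb => // n _; rewrite expnS mulKn // -mul2n.
Qed.

Lemma gh_K_le : (gh_K k eps <= 6 * k)%N.
Proof.
have a0 : (0 : R) < (gh_a k eps)%:R by rewrite ltr0n gh_a_gt0.
have a_le : (gh_a k eps)%:R <= 2 * k%:R :> R by rewrite -natrM ler_nat gh_a_le.
have K_lt : (gh_K k eps)%:R < 2 * (k%:R + (gh_a k eps)%:R) :> R.
  rewrite natrM (_ : 2 * _ = (gh_a k eps)%:R * (2 * (k%:R / (gh_a k eps)%:R + 1))).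
    by rewrite ltr_pM2l // gh_b_lt.
  by field; exact: lt0r_neq0.
by rewrite -(ler_nat R) natrM; lra.
Qed.

End Dimensions.

Lemma card_barH_col_le (n : nat) (f : 'I_n -> nat) (m y : nat) : injective f ->
  (#|[pred x | barH m (f x) y]| <= 2 ^ m)%N.
Proof.
move=> f_inj; have b0 : (0 < 2 ^ m)%N by rewrite expn_gt0.
pose offset (x : 'I_n) : 'I_(2 ^ m) := Ordinal (ltn_pmod (f x) b0).
rewrite -[X in (_ <= X)%N]card_ord.
apply: (leq_card_in offset) => x1 x2; rewrite !inE /barH.
case: eqP => // e1 _; case: eqP => // e2 _ /(congr1 val) /= e3.
by apply: f_inj; rewrite (divn_eq (f x1) (2 ^ m)) (divn_eq (f x2) (2 ^ m)) e1 e2 e3.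
Qed.

Lemma sum_barH_col_le (R : numDomainType) (n : nat) (f : 'I_n -> nat) (m y : nat) :
  injective f -> \sum_(x < n) ((barH m (f x) y)%:R : R) <= (2 ^ m)%:R.
Proof.
move=> f_inj; rewrite -natr_sum ler_nat (leq_trans _ (card_barH_col_le m y f_inj)) //.
rewrite -sum1_card [X in (_ <= X)%N]big_mkcond /=.
by apply: eq_leq; apply: eq_bigr => x _; rewrite inE; case: barH.
Qed.

Lemma sum_sqr_le_div (R : realFieldType) (n : nat) (F : 'I_n -> R) (c : R) :
  (forall i, 0 <= F i <= c / n%:R) -> \sum_i F i ^+ 2 <= c ^+ 2 / n%:R.
Proof.
case: n F => [|n] F F_bnd; first by rewrite big_ord0 invr0 mulr0.
have c0 : 0 <= c / n.+1%:R by case/andP: (F_bnd ord0) => /le_trans; apply.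
apply: le_trans (_ : \sum_(i < n.+1) (c / n.+1%:R) ^+ 2 <= _).
  apply: ler_sum => i _; case/andP: (F_bnd i) => F0 F_le.
  by rewrite ler_pXn2r.
rewrite sumr_const card_ord -mulr_natl le_eqVlt; apply/orP; left; apply/eqP.
by field; rewrite addrC natr1 pnatr_eq0.
Qed.

Section UniformInput.
Variables (R : realType) (k : nat) (eps : R) (f : 'I_k -> nat).
Hypotheses (k_gt0 : (0 < k)%N) (eps_ge0 : 0 <= eps) (f_inj : injective f).

Let S : R := (gh_s k eps)%:R.
Let K : R := (gh_K k eps)%:R.

Lemma Phi_denom_gt0 : 0 < S * expR eps + K - S.
Proof.
have K0 : 0 < K by rewrite ltr0n gh_K_gt0.
have : 0 <= S * (expR eps - 1) by rewrite mulr_ge0 // subr_ge0 expR_ge1.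
by lra.
Qed.

Lemma Phi_ge0 (p : 'I_k -> R) (y : nat) :
  (forall x, 0 <= p x) -> 0 <= Phi eps f p y.
Proof.
move=> p0; rewrite divr_ge0 ?(ltW Phi_denom_gt0) // addr_ge0 // mulr_ge0 //.
  by rewrite subr_ge0 expR_ge1.
by rewrite sumr_ge0 // => x _; rewrite mulr_ge0.
Qed.

Lemma Phi_unif_le (y : nat) : Phi eps f (@unif R k) y <= 12 / K.
Proof.
rewrite /Phi /unif -big_distrr /= -/S -/K.
set n := \sum_(x < k) _.
have n0 : 0 <= n by rewrite sumr_ge0.
have n_le : n <= 2 * S.
  rewrite (le_trans (sum_barH_col_le R (gh_lb k eps) y f_inj)) //.
  by rewrite -/(gh_b k eps) gh_b_double // -mul2n natrM.
have k0 : 0 < k%:R :> R by rewrite ltr0n.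
have K1 : 1 <= K by rewrite ler1n gh_K_gt0.
have K_le : K <= 6 * k%:R by rewrite -natrM ler_nat gh_K_le.
have nK_le : k%:R^-1 * n * K <= 12 * S.
  rewrite [_^-1 * n]mulrC mulrAC ler_pdivrMr //.
  have : n * K <= (2 * S) * (6 * k%:R) by rewrite ler_pM // ler0n.
  by lra.
have t0 : 0 <= expR eps - 1 by rewrite subr_ge0 expR_ge1.
rewrite ler_pdivrMr ?Phi_denom_gt0 // mulrAC ler_pdivlMr ?(lt_le_trans ltr01) //.
have : (expR eps - 1) * (k%:R^-1 * n * K) <= (expR eps - 1) * (12 * S).
  by rewrite ler_wpM2l.
by nra.
Qed.

End UniformInput.

Theorem lemma4p5 :
  exists C : nat,
  forall (R : realType) (k : nat) (eps : R) (f : 'I_k -> nat),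
    (2 <= k)%N -> 0 < eps ->
    injective f ->
    (forall x, f x < gh_K k eps)%N ->
    (forall x, f x %% gh_b k eps != 0)%N ->
    \sum_(y < gh_K k eps) (Phi eps f (@unif R k) y) ^+ 2
      <= C%:R / (gh_K k eps)%:R.
Proof.
exists (12 ^ 2)%N => R k eps f k_ge2 eps_gt0 f_inj _ _.
have k_gt0 : (0 < k)%N by apply: leq_trans k_ge2.
rewrite natrX; apply: sum_sqr_le_div => y.
rewrite Phi_unif_le ?(ltW eps_gt0) // andbT.
by apply: Phi_ge0 => [|x]; [exact: ltW | rewrite invr_ge0].
Qed.
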